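(* For every set of formulas $\Gamma$ and every formula $\alpha$: if $\Gamma\vDash_{\mathcal{M}_1^0}\alpha$ then $\Gamma\vdash_{L_1^0}\alpha$.
   Context: Formulas are built from a countable set of propositional variables using the unary connectives $\neg$ and $\circ$ and the binary connectives $\land,\lor,\to$. Write $\circ^0\alpha=\alpha$, $\circ^{m+1}\alpha=\circ(\circ^m\alpha)$. The Hilbert calculus mbC has as axiom schemas those of a standard axiomatization of positive classical propositional logic in $\land,\lor,\to$, plus (TND) $\alpha\lor\neg\alpha$ and (bc1) $\circ\alpha\to(\alpha\to(\neg\alpha\to\beta))$; its only rule is modus ponens. mbCciw is mbC plus (ciw) $\circ\alpha\lor(\alpha\land\neg\alpha)$. $L_1^0$ is mbCciw plus the schema $\circ\circ\circ\alpha$. $\Gamma\vdash_L\alpha$ means $\alpha$ is derivable from $\Gamma$ in $L$. Semantics: on $\{0,1\}$ use the Boolean operations $\land,\lor,\to,\sim$. Let $\mathbb{B}_1^0=\{x\in\{0,1\}^3: x_1\lor x_2=1,\ x_3\lor\sim(x_1\land x_2)=1\}$. The multialgebra $\mathcal{B}_1^0$ has $x\# y=\{z\in\mathbb{B}_1^0: z_1=x_1\# y_1\}$ for $\#\in\{\land,\lor,\to\}$, $\neg x=\{z\in\mathbb{B}_1^0: z_1=x_2\}$, $\circ x=\{(\sim(x_1\land x_2),x_3,x_3\land\sim(x_1\land x_2))\}$. $D_1^0=\{x: x_1=1\}$, $\mathcal{M}_1^0=(\mathcal{B}_1^0,D_1^0)$. A valuation over $\mathcal{M}_1^0$ is a map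 $h$ from formulas to $\mathbb{B}_1^0$ with $h(\alpha\#\beta)\in h(\alpha)\# h(\beta)$, $h(\neg\alpha)\in\neg h(\alpha)$, $h(\circ\alpha)\in\circ h(\alpha)$. $\Gamma\vDash_{\mathcal{M}_1^0}\alpha$ iff every valuation $h$ with $h[\Gamma]\subseteq D_1^0$ has $h(\alpha)\in D_1^0$. *)

From Stdlib Require Import Bool.

Inductive formula : Type :=
| Var  : nat -> formula
| Neg  : formula -> formula
| Circ : formula -> formula
| And  : formula -> formula -> formula
| Or   : formula -> formula -> formula
| Imp  : formula -> formula -> formula.

Fixpoint circ_iter (m : nat) (a : formula) : formula :=
  match m with
  | O => a
  | S m' => Circ (circ_iter m' a)
  end.

(** * Hilbert calculus L_1^0 = mbC + (ciw) + circ circ circ alpha *)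
Inductive axiom_L10 : formula -> Prop :=
| Ax1 a b : axiom_L10 (Imp a (Imp b a))
| Ax2 a b c : axiom_L10 (Imp (Imp a b) (Imp (Imp a (Imp b c)) (Imp a c)))
| Ax3 a b : axiom_L10 (Imp a (Imp b (And a b)))
| Ax4 a b : axiom_L10 (Imp (And a b) a)
| Ax5 a b : axiom_L10 (Imp (And a b) b)
| Ax6 a b : axiom_L10 (Imp a (Or a b))
| Ax7 a b : axiom_L10 (Imp b (Or a b))
| Ax8 a b c : axiom_L10 (Imp (Imp a c) (Imp (Imp b c) (Imp (Or a b) c)))
| Ax9 a b : axiom_L10 (Or a (Imp a b))
| AxTND a : axiom_L10 (Or a (Neg a))
| Axbc1 a b : axiom_L10 (Imp (Circ a) (Imp a (Imp (Neg a) b)))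
| Axciw a : axiom_L10 (Or (Circ a) (And a (Neg a)))
| AxCirc3 a : axiom_L10 (circ_iter 3 a).

Inductive derivable (Gamma : formula -> Prop) : formula -> Prop :=
| d_hyp a : Gamma a -> derivable Gamma a
| d_ax a : axiom_L10 a -> derivable Gamma a
| d_mp a b : derivable Gamma a -> derivable Gamma (Imp a b) -> derivable Gamma b.

Record triple : Type := mkT { x1 : bool; x2 : bool; x3 : bool }.

Definition inB (x : triple) : Prop :=
  (x1 x || x2 x) = true /\ (x3 x || negb (x1 x && x2 x)) = true.

(** multioperations, as predicates on triples (sets of values) *)
Definition m_and (x y z : triple) : Prop := inB z /\ x1 z = (x1 x && x1 y).
Definition m_or  (x y z : triple) : Prop := inB z /\ x1 z = (x1 x || x1 y).
Definition m_imp (x y z : triple) : Prop := inB z /\ x1 z = implb (x1 x) (x1 y).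
Definition m_neg (x z : triple) : Prop := inB z /\ x1 z = x2 x.
Definition m_circ (x z : triple) : Prop :=
  z = mkT (negb (x1 x && x2 x)) (x3 x) (x3 x && negb (x1 x && x2 x)).

Definition designated (x : triple) : Prop := x1 x = true.

Definition valuation (h : formula -> triple) : Prop :=
  (forall a, inB (h a)) /\
  (forall a b, m_and (h a) (h b) (h (And a b))) /\
  (forall a b, m_or  (h a) (h b) (h (Or a b))) /\
  (forall a b, m_imp (h a) (h b) (h (Imp a b))) /\
  (forall a, m_neg (h a) (h (Neg a))) /\
  (forall a, m_circ (h a) (h (Circ a))).

Definition sem_conseq (Gamma : formula -> Prop) (a : formula) : Prop :=
  forall h, valuation h -> (forall g, Gamma g -> designated (h g)) -> designated (h a).

From Stdlib Require Import Bool PeanoNat Cantor Classical ClassicalEpsilon.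

(* Completeness via a canonical model.  If Gamma does not derive alpha, extend
   Gamma (formulas being countable) to a set D that is maximal among those not
   deriving alpha.  Such a D is closed under derivability, behaves classically
   on the positive connectives, contains a or ¬a, and contains ∘a exactly when
   it does not contain both a and ¬a.  Then h(p) = (p ∈ D, ¬p ∈ D, ¬∘p ∈ D) is
   a valuation designating Gamma but not alpha: the clause for ∘ needs
   ¬∘∘a ∈ D <-> (∘a ∈ D and ¬∘a ∈ D), which follows from ∘∘∘a ∈ D. *)

Definition extend (Gamma : formula -> Prop) (p : formula) : formula -> Prop :=
  fun q => Gamma q \/ q = p.

Lemma derivable_mono (Gamma Delta : formula -> Prop) (a : formula) :
  (forall q, Gamma q -> Delta q) -> derivable Gamma a -> derivable Delta a.
Proof.
  intros sub H; induction H as [a Ha | a Ha | a b _ IHa _ IHab].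
  - now apply d_hyp, sub.
  - now apply d_ax.
  - now apply (d_mp _ a).
Qed.

Lemma derivable_imp_refl (Gamma : formula -> Prop) (p : formula) :
  derivable Gamma (Imp p p).
Proof.
  apply (d_mp _ (Imp p (Imp (Imp p p) p))); [apply d_ax, Ax1|].
  apply (d_mp _ (Imp p (Imp p p))); [apply d_ax, Ax1|].
  apply d_ax, Ax2.
Qed.

Lemma deduction (Gamma : formula -> Prop) (p b : formula) :
  derivable (extend Gamma p) b -> derivable Gamma (Imp p b).
Proof.
  intro H; induction H as [a [Ha | ->] | a Ha | a b _ IHa _ IHab].
  - apply (d_mp _ a); [now apply d_hyp | apply d_ax, Ax1].
  - apply derivable_imp_refl.
  - apply (d_mp _ a); [now apply d_ax | apply d_ax, Ax1].
  - apply (d_mp _ _ _ IHab), (d_mp _ _ _ IHa), d_ax, Ax2.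
Qed.

Lemma derivable_cut (Gamma : formula -> Prop) (p a : formula) :
  derivable Gamma p -> derivable (extend Gamma p) a -> derivable Gamma a.
Proof.
  intros Hp H; induction H as [a [Ha | ->] | a Ha | a b _ IHa _ IHab].
  - now apply d_hyp.
  - exact Hp.
  - now apply d_ax.
  - now apply (d_mp _ a).
Qed.

Lemma derivable_chain_union (C : nat -> formula -> Prop) (a : formula) :
  (forall n m q, n <= m -> C n q -> C m q) ->
  derivable (fun q => exists n, C n q) a -> exists n, derivable (C n) a.
Proof.
  intros mono H; induction H as [a [n Ha] | a Ha | a b _ [n Ha] _ [m Hab]].
  - exists n; now apply d_hyp.
  - exists 0; now apply d_ax.
  - exists (max n m); apply (d_mp _ a).
    + apply (derivable_mono (C n)); [intro q; apply mono, Nat.le_max_l | exact Ha].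
    + apply (derivable_mono (C m)); [intro q; apply mono, Nat.le_max_r | exact Hab].
Qed.

Lemma to_nat_inj (m n m' n' : nat) :
  to_nat (m, n) = to_nat (m', n') -> m = m' /\ n = n'.
Proof.
  intro E; apply (f_equal of_nat) in E; rewrite !cancel_of_to in E.
  now injection E.
Qed.

Fixpoint code (a : formula) : nat :=
  match a with
  | Var n => to_nat (0, n)
  | Neg a => to_nat (1, code a)
  | Circ a => to_nat (2, code a)
  | And a b => to_nat (3, to_nat (code a, code b))
  | Or a b => to_nat (4, to_nat (code a, code b))
  | Imp a b => to_nat (5, to_nat (code a, code b))
  end.

Lemma code_inj (a b : formula) : code a = code b -> a = b.
Proof.
  revert b; induction a; intros [] E; cbn [code] in E;
    apply to_nat_inj in E as [Etag E]; try discriminate Etag;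
    try apply to_nat_inj in E as [E1 E2]; f_equal; auto.
Qed.

Definition saturated (D : formula -> Prop) (alpha : formula) : Prop :=
  ~ derivable D alpha /\ (forall p, ~ derivable (extend D p) alpha -> D p).

Section Lindenbaum.

Variables (Gamma : formula -> Prop) (alpha : formula).

Fixpoint lindenbaum_stage (n : nat) : formula -> Prop :=
  match n with
  | 0 => Gamma
  | S n => fun q => lindenbaum_stage n q \/
             (code q = n /\ ~ derivable (extend (lindenbaum_stage n) q) alpha)
  end.

Definition lindenbaum (q : formula) : Prop := exists n, lindenbaum_stage n q.

Lemma lindenbaum_extends (q : formula) : Gamma q -> lindenbaum q.
Proof. now exists 0. Qed.

Lemma lindenbaum_stage_mono (n m : nat) (q : formula) :
  n <= m -> lindenbaum_stage n q -> lindenbaum_stage m q.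
Proof. induction 1; simpl; auto. Qed.

Lemma lindenbaum_stage_nonderivable (n : nat) :
  ~ derivable Gamma alpha -> ~ derivable (lindenbaum_stage n) alpha.
Proof.
  intro H0; induction n as [|n IH]; [exact H0|]; simpl.
  (* Since code is injective, a stage adds at most one formula. *)
  destruct (classic (exists p, code p = n /\
                      ~ derivable (extend (lindenbaum_stage n) p) alpha))
    as [[p [Ep Hp]] | Hnone]; intro Hd.
  - apply Hp; revert Hd; apply derivable_mono.
    intros q [Hq | [Eq _]]; [now left | right; apply code_inj; congruence].
  - apply IH; revert Hd; apply derivable_mono.
    intros q [Hq | Hq]; [exact Hq | exfalso; apply Hnone; now exists q].
Qed.

Lemma lindenbaum_saturated : ~ derivable Gamma alpha -> saturated lindenbaum alpha.
Proof.
  intro H0; split.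
  - intro Hd.
    destruct (derivable_chain_union _ _ lindenbaum_stage_mono Hd) as [n Hn].
    exact (lindenbaum_stage_nonderivable n H0 Hn).
  - intros p Hp; exists (S (code p)); right; split; [reflexivity|].
    intro Hd; apply Hp; revert Hd; apply derivable_mono.
    intros q [Hq | Hq]; [left; now exists (code p) | now right].
Qed.

End Lindenbaum.

Section Saturated.

Variables (D : formula -> Prop) (alpha : formula).
Hypothesis D_saturated : saturated D alpha.

Lemma saturated_closed (p : formula) : derivable D p -> D p.
Proof.
  intro Hp; apply (proj2 D_saturated); intro Hd.
  exact (proj1 D_saturated (derivable_cut _ _ _ Hp Hd)).
Qed.

Lemma saturated_axiom (p : formula) : axiom_L10 p -> D p.
Proof. intro Hp; now apply saturated_closed, d_ax. Qed.

Lemma saturated_mp (a b : formula) : D a -> D (Imp a b) -> D b.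
Proof. intros Ha Hab; apply saturated_closed, (d_mp _ a); now apply d_hyp. Qed.

Lemma saturated_not_mem (p : formula) : ~ D p -> derivable D (Imp p alpha).
Proof.
  intro Hp; apply deduction, NNPP; intro Hd.
  exact (Hp (proj2 D_saturated p Hd)).
Qed.

Lemma saturated_and (a b : formula) : D (And a b) <-> D a /\ D b.
Proof.
  split.
  - intro H; split; apply (saturated_mp _ _ H), saturated_axiom; constructor.
  - intros [Ha Hb]; apply (saturated_mp _ _ Hb), (saturated_mp _ _ Ha).
    apply saturated_axiom, Ax3.
Qed.

Lemma saturated_or (a b : formula) : D (Or a b) <-> D a \/ D b.
Proof.
  split.
  - intro H; apply NNPP; intro Hab; apply (proj1 D_saturated).
    apply (d_mp _ (Or a b)); [now apply d_hyp|].
    apply (d_mp _ (Imp b alpha)); [apply saturated_not_mem; tauto|].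
    apply (d_mp _ (Imp a alpha)); [apply saturated_not_mem; tauto|].
    apply d_ax, Ax8.
  - intros [H | H]; apply (saturated_mp _ _ H), saturated_axiom; constructor.
Qed.

Lemma saturated_imp (a b : formula) : D (Imp a b) <-> (D a -> D b).
Proof.
  split; [intros Hab Ha; exact (saturated_mp _ _ Ha Hab)|].
  intro Hab; destruct (classic (D a)) as [Ha | Ha].
  - apply (saturated_mp _ _ (Hab Ha)), saturated_axiom, Ax1.
  - destruct (proj1 (saturated_or _ _) (saturated_axiom _ (Ax9 a b))); tauto.
Qed.

Lemma saturated_tnd (a : formula) : D a \/ D (Neg a).
Proof. apply saturated_or, saturated_axiom, AxTND. Qed.

Lemma saturated_circ (a : formula) : D (Circ a) <-> ~ (D a /\ D (Neg a)).
Proof.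
  split.
  - intros Hc [Ha Hn]; apply (proj1 D_saturated), d_hyp.
    apply (saturated_mp _ _ Hn), (saturated_mp _ _ Ha), (saturated_mp _ _ Hc).
    apply saturated_axiom, Axbc1.
  - intro H.
    destruct (proj1 (saturated_or _ _) (saturated_axiom _ (Axciw a))) as [Hc | Hc];
      [exact Hc | now apply saturated_and in Hc].
Qed.

Lemma saturated_neg_circ_circ (a : formula) :
  D (Neg (Circ (Circ a))) <-> D (Circ a) /\ D (Neg (Circ a)).
Proof.
  pose proof (proj1 (saturated_circ _) (saturated_axiom _ (AxCirc3 a))) as H3.
  pose proof (saturated_circ (Circ a)) as Hcc.
  pose proof (saturated_tnd (Circ (Circ a))); tauto.
Qed.

End Saturated.

Definition truth (P : Prop) : bool :=
  if excluded_middle_informative P then true else false.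

Lemma truth_spec (P : Prop) : truth P = true <-> P.
Proof. unfold truth; destruct excluded_middle_informative; intuition discriminate. Qed.

Lemma truth_ext (P Q : Prop) : (P <-> Q) -> truth P = truth Q.
Proof. unfold truth; do 2 destruct excluded_middle_informative; tauto. Qed.

Lemma truth_and (P Q : Prop) : truth (P /\ Q) = truth P && truth Q.
Proof. unfold truth; do 3 destruct excluded_middle_informative; simpl; tauto. Qed.

Lemma truth_or (P Q : Prop) : truth (P \/ Q) = truth P || truth Q.
Proof. unfold truth; do 3 destruct excluded_middle_informative; simpl; tauto. Qed.

Lemma truth_imp (P Q : Prop) : truth (P -> Q) = implb (truth P) (truth Q).
Proof. unfold truth; do 3 destruct excluded_middle_informative; simpl; tauto. Qed.

Lemma truth_not (P : Prop) : truth (~ P) = negb (truth P).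
Proof. unfold truth; do 2 destruct excluded_middle_informative; simpl; tauto. Qed.

(* The third coordinate is forced: it must equal the second coordinate of the
   value of Circ p. *)
Definition canonical_valuation (D : formula -> Prop) (p : formula) : triple :=
  mkT (truth (D p)) (truth (D (Neg p))) (truth (D (Neg (Circ p)))).

Lemma canonical_designated (D : formula -> Prop) (p : formula) :
  designated (canonical_valuation D p) <-> D p.
Proof. apply truth_spec. Qed.

Lemma canonical_valuation_inB (D : formula -> Prop) (alpha : formula) (p : formula) :
  saturated D alpha -> inB (canonical_valuation D p).
Proof.
  intro Hsat; unfold inB; cbn.
  rewrite <- truth_or, <- truth_and, <- truth_not, <- truth_or, !truth_spec.
  split; [apply (saturated_tnd _ _ Hsat)|].
  destruct (saturated_tnd _ _ Hsat (Circ p)) as [Hc | Hn]; [right | now left].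
  now apply (saturated_circ _ _ Hsat).
Qed.

Lemma canonical_valuation_valuation (D : formula -> Prop) (alpha : formula) :
  saturated D alpha -> valuation (canonical_valuation D).
Proof.
  intro Hsat; pose proof (fun p => canonical_valuation_inB D alpha p Hsat) as Hin.
  repeat split; intros; try apply Hin; cbn.
  - rewrite <- truth_and; apply truth_ext, (saturated_and _ _ Hsat).
  - rewrite <- truth_or; apply truth_ext, (saturated_or _ _ Hsat).
  - rewrite <- truth_imp; apply truth_ext, (saturated_imp _ _ Hsat).
  - unfold m_circ, canonical_valuation; cbn; f_equal.
    + rewrite <- truth_and, <- truth_not; apply truth_ext, (saturated_circ _ _ Hsat).
    + rewrite <- truth_and, <- truth_not, <- truth_and; apply truth_ext.
      rewrite (saturated_neg_circ_circ _ _ Hsat), (saturated_circ _ _ Hsat); tauto.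
Qed.

Theorem theorem6 (Gamma : formula -> Prop) (alpha : formula) :
  sem_conseq Gamma alpha -> derivable Gamma alpha.
Proof.
  intro Hsem; apply NNPP; intro Hnd.
  pose proof (lindenbaum_saturated Gamma alpha Hnd) as Hsat.
  apply (proj1 Hsat), d_hyp, canonical_designated, Hsem.
  - exact (canonical_valuation_valuation _ _ Hsat).
  - intros g Hg; apply canonical_designated, lindenbaum_extends, Hg.
Qed.
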